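(* Let $R=\mathbb{C}[x_1,x_2,x_3]$ graded by $\deg x_m=2$. For a composition $(a_1,\ldots,a_k)$ of $3$ let $R_{a_1\cdots a_k}$ denote the subring of polynomials invariant under $S_{a_1}\times\cdots\times S_{a_k}$ (each factor permuting the corresponding consecutive block of variables); thus $R_{111}=R$, $R_{21}$ consists of the polynomials symmetric in $x_1,x_2$, $R_{12}$ of those symmetric in $x_2,x_3$, and $R_3$ of the symmetric polynomials. Consider the graded $R_{21}$-$R_{21}$-bimodule $$M=R_{111}\otimes_{R_{12}}R_{111}\otimes_{R_{21}}R_{21},$$ where the left action is the restriction to $R_{21}\subset R_{111}$ of the left $R_{111}$-action. Then there is an isomorphism of graded $R_{21}$-$R_{21}$-bimodules $$M\;\cong\;\big(R_{21}\otimes_{R_3}R_{21}\big)\;\oplus\;R_{21}\{2\}.$$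
   Context: For a graded bimodule $N$, $N\{k\}$ denotes $N$ with its grading shifted upward by $k$. *)

From HB Require Import structures.
From mathcomp Require Import all_boot all_order all_algebra all_fingroup.
From mathcomp Require Import mpoly complex reals.

Set Implicit Arguments.
Unset Strict Implicit.
Unset Printing Implicit Defensive.

Import Order.TTheory GRing.Theory Num.Theory.
Local Open Scope ring_scope.

(*  - The complex numbers are  C := R[i]  (= complex R) for a realType R.     *)
(*  - P R := {mpoly C[3]} = C[x_1,x_2,x_3]; variable x_m is 'X_(m-1).         *)
(*  - The grading is deg x_m = 2, i.e. the grading degree of a polynomial    *)
(*    homogeneous of total degree e is 2e.  Gradings are indexed by nat     *)
(*    (all modules involved are nonnegatively graded).                       *)
(*  - Tensor products  A (x)_S B (x)_S' D  of modules over commutative       *)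
(*    C-algebras are presented concretely: an element is a finite formal     *)
(*    sum of pure tensors (a list of triples/pairs of elements of the        *)
(*    respective rings), and two formal sums represent the same element of   *)
(*    the tensor product iff every S-balanced multilinear map into every     *)
(*    C-vector space takes the same value on them (universal property).      *)
(*    Maps out of a tensor product are given on representatives and must     *)
(*    respect this equivalence.                                              *)

Section Defs.
Variable R : realType.

Definition P := {mpoly R[i][3]}.

Definition i0 : 'I_3 := @Ordinal 3 0 isT.
Definition i1 : 'I_3 := @Ordinal 3 1 isT.
Definition i2 : 'I_3 := @Ordinal 3 2 isT.

Definition R111 : pred P := predT.
Definition R21 : pred P := fun p => msym (tperm i0 i1) p == p.
Definition R12 : pred P := fun p => msym (tperm i1 i2) p == p.
Definition R3 : pred P := fun p => p \is symmetric.

(* Graded pieces: p lies in degree d of the module (ring){k}, where the     *)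
(* ring is graded by deg x_m = 2 and {k} shifts the grading up by k.         *)
Definition homdeg (k d : nat) (p : P) : Prop :=
  p = 0 \/ exists e : nat, d = (2 * e + k)%N /\ p \is e.-homog.

Definition balanced2 (S A B : pred P) (V : lmodType R[i]) (beta : P -> P -> V)
  : Prop :=
  [/\ (forall a a' b, A a -> A a' -> B b -> beta (a + a') b = beta a b + beta a' b),
      (forall a b b', A a -> B b -> B b' -> beta a (b + b') = beta a b + beta a b'),
      (forall (c : R[i]) a b, A a -> B b -> beta (c *: a) b = c *: beta a b),
      (forall (c : R[i]) a b, A a -> B b -> beta a (c *: b) = c *: beta a b)
    & (forall s a b, S s -> A a -> B b -> beta (a * s) b = beta a (s * b))].

Definition valid2 (A B : pred P) (x : seq (P * P)) : Prop :=
  forall t, t \in x -> A t.1 /\ B t.2.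

Definition teq2 (S A B : pred P) (x y : seq (P * P)) : Prop :=
  forall (V : lmodType R[i]) (beta : P -> P -> V), balanced2 S A B beta ->
    \sum_(t <- x) beta t.1 t.2 = \sum_(t <- y) beta t.1 t.2.

Definition balanced3 (S1 S2 A B D : pred P) (V : lmodType R[i])
  (beta : P -> P -> P -> V) : Prop :=
  [/\ (forall a a' b d, A a -> A a' -> B b -> D d ->
          beta (a + a') b d = beta a b d + beta a' b d),
      (forall a b b' d, A a -> B b -> B b' -> D d ->
          beta a (b + b') d = beta a b d + beta a b' d),
      (forall a b d d', A a -> B b -> D d -> D d' ->
          beta a b (d + d') = beta a b d + beta a b d'),
      (forall (c : R[i]) a b d, A a -> B b -> D d ->
          beta (c *: a) b d = c *: beta a b d /\
          beta a (c *: b) d = c *: beta a b d /\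
          beta a b (c *: d) = c *: beta a b d)
    & (forall s a b d, S1 s -> A a -> B b -> D d ->
          beta (a * s) b d = beta a (s * b) d) /\
      (forall s a b d, S2 s -> A a -> B b -> D d ->
          beta a (b * s) d = beta a b (s * d))].

Definition valid3 (A B D : pred P) (x : seq (P * P * P)) : Prop :=
  forall t, t \in x -> [/\ A t.1.1, B t.1.2 & D t.2].

Definition teq3 (S1 S2 A B D : pred P) (x y : seq (P * P * P)) : Prop :=
  forall (V : lmodType R[i]) (beta : P -> P -> P -> V),
    balanced3 S1 S2 A B D beta ->
    \sum_(t <- x) beta t.1.1 t.1.2 t.2 = \sum_(t <- y) beta t.1.1 t.1.2 t.2.

(* The bimodule  M = R_111 (x)_{R_12} R_111 (x)_{R_21} R_21, as a graded    *)
(* R_21-R_21-bimodule (left action: multiplication on the first factor,     *)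
(* restricted to R_21; right action: multiplication on the last factor).    *)
Definition Mel := seq (P * P * P).
Definition Mvalid (x : Mel) := valid3 R111 R111 R21 x.
Definition Meq (x y : Mel) := teq3 R12 R21 R111 R111 R21 x y.
Definition Madd (x y : Mel) : Mel := x ++ y.
Definition Mscale (c : R[i]) (x : Mel) : Mel :=
  [seq (c *: t.1.1, t.1.2, t.2) | t <- x].
Definition Mlact (r : P) (x : Mel) : Mel := [seq (r * t.1.1, t.1.2, t.2) | t <- x].
Definition Mract (x : Mel) (r : P) : Mel := [seq (t.1.1, t.1.2, t.2 * r) | t <- x].
Definition Mhomrep (d : nat) (x : Mel) : Prop :=
  forall t, t \in x -> exists d1 d2 d3, d = (d1 + d2 + d3)%N /\
    [/\ homdeg 0 d1 t.1.1, homdeg 0 d2 t.1.2 & homdeg 0 d3 t.2].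
Definition Mhom (d : nat) (x : Mel) : Prop :=
  exists y, [/\ Mvalid y, Meq x y & Mhomrep d y].

(* The bimodule  N = (R_21 (x)_{R_3} R_21)  (+)  R_21{2}.                   *)
Definition Nel := (seq (P * P) * P)%type.
Definition Nvalid (x : Nel) := valid2 R21 R21 x.1 /\ R21 x.2.
Definition Neq (x y : Nel) := teq2 R3 R21 R21 x.1 y.1 /\ x.2 = y.2.
Definition Nadd (x y : Nel) : Nel := (x.1 ++ y.1, x.2 + y.2).
Definition Nscale (c : R[i]) (x : Nel) : Nel :=
  ([seq (c *: t.1, t.2) | t <- x.1], c *: x.2).
Definition Nlact (r : P) (x : Nel) : Nel :=
  ([seq (r * t.1, t.2) | t <- x.1], r * x.2).
Definition Nract (x : Nel) (r : P) : Nel :=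
  ([seq (t.1, t.2 * r) | t <- x.1], x.2 * r).
Definition Nhomrep (d : nat) (x : Nel) : Prop :=
  (forall t, t \in x.1 -> exists d1 d2, d = (d1 + d2)%N /\
      homdeg 0 d1 t.1 /\ homdeg 0 d2 t.2)
  /\ homdeg 2 d x.2.
Definition Nhom (d : nat) (x : Nel) : Prop :=
  exists y, [/\ Nvalid y, Neq x y & Nhomrep d y].

Definition graded_bimod_iso_MN (phi : Mel -> Nel) : Prop :=
      (forall x, Mvalid x -> Nvalid (phi x)) /\
      (forall x y, Mvalid x -> Mvalid y -> Meq x y -> Neq (phi x) (phi y)) /\
      (forall x y, Mvalid x -> Mvalid y -> Neq (phi (Madd x y)) (Nadd (phi x) (phi y))) /\
      (forall c x, Mvalid x -> Neq (phi (Mscale c x)) (Nscale c (phi x))) /\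
      (forall r x, R21 r -> Mvalid x -> Neq (phi (Mlact r x)) (Nlact r (phi x))) /\
      (forall r x, R21 r -> Mvalid x -> Neq (phi (Mract x r)) (Nract (phi x) r)) /\
      (forall x y, Mvalid x -> Mvalid y -> Neq (phi x) (phi y) -> Meq x y) /\
      (forall z, Nvalid z -> exists x, Mvalid x /\ Neq (phi x) z) /\
      (forall d x, Mvalid x -> (Mhom d x <-> Nhom d (phi x))).

End Defs.

From HB Require Import structures.
From mathcomp Require Import all_boot all_order all_algebra all_fingroup.
From mathcomp Require Import mpoly complex reals.
From mathcomp Require Import ring zify.

Set Implicit Arguments.
Unset Strict Implicit.
Unset Printing Implicit Defensive.
Import Order.TTheory GRing.Theory Num.Theory.
Local Open Scope ring_scope.

(* A pure tensor [a (x) b (x) d] of [M] only depends on [a] and on [b d] in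
   [R (x)_R12 R]; as [R] is free over [R_12 = R^s23] with basis [1, x2], [M] is the
   free left [R]-module on [1 (x) 1 (x) 1] and [1 (x) x2 (x) 1]: its elements have
   coordinates [(u, v)], obtained with the divided difference [d23].  Likewise
   [R_21] is free over [R_3] with basis [1, x3, x3^2], so [R_21 (x)_R3 R_21] is the
   free left [R_21]-module on [1 (x) x3^k], k < 3.  Writing [u] and [v] in the basis
   [1, x1] of [R] over [R_21] (using [d12]) gives four [R_21]-valued coordinates,
   three for [R_21 (x)_R3 R_21] and one for [R_21{2}]; the braid relation for
   [s12, s23] is what makes the [R_21 (x)_R3 R_21]-coordinates of an element
   [g (x) 1] with [g] in [R_21] symmetric.  Both bimodules are thereby identified
   with [R^2], compatibly with all the structure. *)

(** * Divided differences *)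

Section MPolyHomog.
Variables (n : nat) (K : idomainType).
Local Notation P := {mpoly K[n]}.
Implicit Types (p q w : P) (i j : 'I_n) (s : 'S_n).

Lemma msymX1 s i : msym s ('X_i : P) = 'X_(s i).
Proof. by rewrite /msym mmapX mmap1U. Qed.

Lemma msym_dhomog s d p : p \is d.-homog -> msym s p \is d.-homog.
Proof.
move=> /dhomogP homp; apply/dhomogP => m.
rewrite mcoeff_msupp mcoeff_sym -mcoeff_msupp => /homp <-.
exact/esym/mdeg_mperm.
Qed.

Lemma mpolyX_dhomog i : ('X_i : P) \is 1.-homog.
Proof. by rewrite dhomogX; apply/eqP; exact: mdeg1. Qed.

Lemma mpolyX_subr_neq0 i j : i != j -> 'X_i - 'X_j != 0 :> P.
Proof.
move=> neq_ij; apply/negP => /eqP /(congr1 (mcoeff U_(i))).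
rewrite mcoeffB !mcoeffXU eqxx eq_sym (negbTE neq_ij) subr0 mcoeff0 => /eqP.
by rewrite oner_eq0.
Qed.

Lemma mpoly_alg_ind (Q : P -> Prop) :
  Q 1 -> (forall i, Q 'X_i) ->
  (forall p q, Q p -> Q q -> Q (p + q)) ->
  (forall p q, Q p -> Q q -> Q (p * q)) ->
  (forall (c : K) p, Q p -> Q (c *: p)) ->
  forall p, Q p.
Proof.
move=> Q1 QX QD QM QZ; elim/mpolyind => [|c m p _ _ Qp].
  by rewrite -(scale0r 1); apply: QZ.
apply: QD => //; apply: QZ; rewrite mpolyXE_id.
apply: big_ind => // i _; elim: (m i) => [|k IHk]; first by rewrite expr0.
by rewrite exprS; apply: QM.
Qed.

Lemma pihomog_mul_dhomog e k (l q : P) : l \is e.-homog ->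
  pihomog mdeg (e + k) (l * q) = l * pihomog mdeg k q.
Proof.
move=> homl; have lt_k : (k < msize q + k.+1)%N by rewrite addnS ltnS leq_addl.
rewrite {1}(pihomog_partitionE (leq_addr k.+1 (msize q))) mulr_sumr raddf_sum /=.
rewrite (bigD1 (Ordinal lt_k)) //= pihomog_dE ?dhomogM ?pihomogP //.
rewrite big1 ?addr0 // => d neq_dk; apply: pihomog_ne0; last first.
  by apply: dhomogM homl _; apply: pihomogP.
by rewrite eqn_add2l; apply: contra neq_dk => /eqP eq_dk; apply/eqP/val_inj.
Qed.

(* [shomog k o p]: [p] is homogeneous of degree [k - o], which is negative,
   forcing [p = 0], when [k < o]. *)
Definition shomog (k o : nat) p := ((k < o)%N -> p = 0) /\ p \is (k - o).-homog.

Lemma dhomog_shomog k p : p \is k.-homog -> shomog k 0 p.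
Proof. by split; rewrite ?subn0. Qed.

Lemma shomog0 k o : shomog k o 0.
Proof. by split=> //; apply: dhomog0. Qed.

Lemma shomogD k o p q : shomog k o p -> shomog k o q -> shomog k o (p + q).
Proof.
case=> p0 homp [q0 homq]; split; last exact: rpredD.
by move=> lt_ko; rewrite p0 // q0 // addr0.
Qed.

Lemma shomogN k o p : shomog k o p -> shomog k o (- p).
Proof.
case=> p0 homp; split; first by move=> lt_ko; rewrite p0 // oppr0.
by rewrite -scaleN1r; apply: dhomogZ.
Qed.

Lemma shomogB k o p q : shomog k o p -> shomog k o q -> shomog k o (p - q).
Proof. by move=> homp homq; apply/shomogD/shomogN. Qed.

Lemma shomog_mull k o e h p : h \is e.-homog -> shomog k (o + e) p -> shomog k o (h * p).
Proof.
move=> homh [p0 homp]; have [lt_koe|le_oek] := ltnP k (o + e).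
  by rewrite p0 // mulr0; apply: shomog0.
split; first by move=> lt_ko; lia.
by rewrite (_ : k - o = e + (k - (o + e)))%N; [apply: dhomogM | lia].
Qed.

Lemma shomog_mulr k o e h p : h \is e.-homog -> shomog k o p -> shomog (k + e) o (h * p).
Proof.
move=> homh [p0 homp]; have [lt_ko|le_ok] := ltnP k o.
  by rewrite p0 // mulr0; apply: shomog0.
split; first by move=> lt; lia.
by rewrite (_ : k + e - o = e + (k - o))%N; [apply: dhomogM | lia].
Qed.

End MPolyHomog.

Section DividedDifference.
Variables (n : nat) (K : idomainType).
Local Notation P := {mpoly K[n]}.
Implicit Types (w : P) (i j : 'I_n).

Lemma dd_exists i j w : exists q, ('X_i - 'X_j) * q == w - msym (tperm i j) w.
Proof.
suff [q defq] : exists q, ('X_i - 'X_j) * q = w - msym (tperm i j) w.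
  by exists q; rewrite defq.
elim/mpoly_alg_ind: w.
- by exists 0; rewrite msym1 mulr0 subrr.
- move=> k; rewrite msymX1.
  have [->|neq_ki] := eqVneq k i; first by exists 1; rewrite tpermL mulr1.
  have [->|neq_kj] := eqVneq k j.
    by exists (-1); rewrite tpermR mulrN1 opprB.
  by exists 0; rewrite tpermD 1?eq_sym // mulr0 subrr.
- move=> p q [a defa] [b defb]; exists (a + b).
  by rewrite msymD mulrDr defa defb opprD addrACA.
- move=> p q [a defa] [b defb]; exists (a * q + msym (tperm i j) p * b).
  by rewrite msymM mulrDr mulrA defa mulrCA defb mulrBl mulrBr addrA subrK.
- move=> c p [a defa]; exists (c *: a).
  by rewrite msymZ -scalerAr defa scalerBr.
Qed.

(* The divided difference [(w - s_ij w) / (x_i - x_j)], sealed behind a [Qed] so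
   that unification never unfolds the underlying [xchoose]. *)
Lemma dd_spec : {dd : 'I_n -> 'I_n -> P -> P |
  forall i j w, ('X_i - 'X_j) * dd i j w = w - msym (tperm i j) w}.
Proof.
exists (fun i j w => xchoose (dd_exists i j w)) => i j w.
exact/eqP/(xchooseP (dd_exists i j w)).
Qed.

Definition dd := sval dd_spec.

End DividedDifference.

(* The coordinates of [w] in the basis [(1, x_i)] over the [s_ij]-invariants. *)
HB.lock Definition coordX n (K : idomainType) (i j : 'I_n) (w : {mpoly K[n]}) :=
  (w - 'X_i * dd i j w, dd i j w).

Section Transposition.
Variables (n : nat) (K : idomainType) (i j : 'I_n).
Local Notation P := {mpoly K[n]}.
Implicit Types (p q w f : P).
Hypothesis neq_ij : i != j.
Local Notation sij := (msym (tperm i j)).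

Lemma ddP w : ('X_i - 'X_j) * dd i j w = w - sij w.
Proof. exact: (svalP (@dd_spec n K)). Qed.

Lemma dd_unique w q : ('X_i - 'X_j) * q = w - sij w -> dd i j w = q.
Proof. by move=> defq; apply: (mulfI (mpolyX_subr_neq0 K neq_ij)); rewrite ddP defq. Qed.

Lemma dd_eq0 w : sij w = w -> dd i j w = 0.
Proof. by move=> symw; apply: dd_unique; rewrite symw subrr mulr0. Qed.

Lemma dd0 : dd i j (0 : P) = 0.
Proof. by rewrite dd_eq0 ?msym0. Qed.

Lemma msym_dd w : sij w = w - ('X_i - 'X_j) * dd i j w.
Proof. by rewrite ddP opprB addrC subrK. Qed.

Lemma dd_sym w : sij (dd i j w) = dd i j w.
Proof.
apply: (mulfI (mpolyX_subr_neq0 K neq_ij)); apply: oppr_inj.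
have := congr1 sij (ddP w).
rewrite msymM !msymB -msymMm tperm2 msym1m !msymX1 tpermL tpermR => defs.
by rewrite -mulNr opprB defs ddP opprB.
Qed.

Lemma dd_addX p q : sij p = p -> sij q = q -> dd i j (p + q * 'X_i) = q.
Proof.
move=> symp symq; apply: dd_unique.
by rewrite msymD msymM symp symq msymX1 tpermL opprD addrACA subrr add0r -mulrBr mulrC.
Qed.

Lemma coordXE w : coordX i j w = (w - 'X_i * dd i j w, dd i j w).
Proof. by rewrite coordX.unlock. Qed.

Lemma coordX_decomp w : w = (coordX i j w).1 + (coordX i j w).2 * 'X_i.
Proof. by rewrite coordXE /= mulrC subrK. Qed.

Lemma coordX_sym w :
  sij (coordX i j w).1 = (coordX i j w).1 /\ sij (coordX i j w).2 = (coordX i j w).2.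
Proof.
rewrite coordXE /=; split; last exact: dd_sym.
by rewrite msymB msymM msymX1 tpermL dd_sym msym_dd; ring.
Qed.

Lemma coordX_unique p q : sij p = p -> sij q = q -> coordX i j (p + q * 'X_i) = (p, q).
Proof. by move=> symp symq; rewrite coordXE dd_addX // mulrC addrK. Qed.

Lemma coordX_invariant p : sij p = p -> coordX i j p = (p, 0).
Proof. by move=> symp; rewrite coordXE dd_eq0 // mulr0 subr0. Qed.

Lemma coordX_mulD f w w' : sij f = f ->
  coordX i j (f * w + w') = (f, f) * coordX i j w + coordX i j w'.
Proof.
move=> symf; have [sym1 sym2] := coordX_sym w; have [sym1' sym2'] := coordX_sym w'.
rewrite {1}(coordX_decomp w) {1}(coordX_decomp w') mulrDr mulrA addrACA -mulrDl.
by rewrite coordX_unique // msymD msymM ?symf ?sym1 ?sym2 ?sym1' ?sym2'.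
Qed.

Lemma dd_mulD f w w' : sij f = f -> dd i j (f * w + w') = f * dd i j w + dd i j w'.
Proof. by move=> symf; have := congr1 snd (coordX_mulD w w' symf); rewrite !coordXE. Qed.

Lemma coordX0 : coordX i j (0 : P) = 0.
Proof. by rewrite coordX_invariant ?msym0. Qed.

Lemma coordX_mull f w : sij f = f -> coordX i j (f * w) = (f, f) * coordX i j w.
Proof. by move=> symf; have := coordX_mulD w 0 symf; rewrite !addr0 coordX0 addr0. Qed.

Lemma coordXD w w' : coordX i j (w + w') = coordX i j w + coordX i j w'.
Proof. by have := coordX_mulD w w' (@msym1 _ K (tperm i j)); rewrite !mul1r. Qed.

Lemma coordXZ (a : K) w : coordX i j (a *: w) = a *: coordX i j w.
Proof.
have symC : sij a%:MP = a%:MP by rewrite -[a%:MP]mulr1 mul_mpolyC msymZ msym1.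
have := coordX_mulD w 0 symC; rewrite addr0 mul_mpolyC => ->.
by rewrite coordX0 addr0; apply/pair_equal_spec; rewrite /= !mul_mpolyC.
Qed.

Lemma coordX1 : coordX i j (1 : P) = (1, 0).
Proof. by rewrite coordX_invariant ?msym1. Qed.

Lemma coordX_X : coordX i j ('X_i : P) = (0, 1).
Proof. by rewrite -[X in coordX _ _ X]add0r -[X in 0 + X]mul1r coordX_unique ?msym0 ?msym1. Qed.

Lemma pihomog_dd_eq0 d k w : w \is d.-homog -> k.+1 != d ->
  pihomog mdeg k (dd i j w) = 0.
Proof.
move=> homw neq_kd; have homX : ('X_i - 'X_j : P) \is 1.-homog.
  by apply: rpredB; apply: mpolyX_dhomog.
apply: (mulfI (mpolyX_subr_neq0 K neq_ij)).
rewrite mulr0 -(pihomog_mul_dhomog _ _ homX) ddP (pihomog_ne0 (d := d)) // 1?eq_sym //.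
by apply: rpredB => //; apply: msym_dhomog.
Qed.

Lemma dd_dhomog d w : w \is d.-homog -> dd i j w \is d.-1.-homog.
Proof.
move=> homw; rewrite (pihomog_partitionE (leqnn (msize (dd i j w)))).
apply: rpred_sum => k _; have [<-|neq_kd] := eqVneq k.+1 d.
  exact: pihomogP.
by rewrite (pihomog_dd_eq0 homw neq_kd) dhomog0.
Qed.

Lemma dd_dhomog0 w : w \is 0.-homog -> dd i j w = 0.
Proof.
move=> homw; rewrite (pihomog_partitionE (leqnn (msize (dd i j w)))).
by rewrite big1 // => k _; apply: pihomog_dd_eq0 homw _.
Qed.

Lemma shomog_dd k o w : shomog k o w -> shomog k o.+1 (dd i j w).
Proof.
case=> w0 homw; have [lt_ko|le_ok] := ltnP k o.
  by rewrite w0 // dd0; split=> //; apply: dhomog0.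
split; first by move=> lt_kSo; apply: dd_dhomog0; move: homw; rewrite (_ : k - o = 0)%N //; lia.
by rewrite subnS; apply: dd_dhomog.
Qed.

Lemma shomog_coordX k w :
  shomog k 0 w -> shomog k 0 (coordX i j w).1 /\ shomog k 1 (coordX i j w).2.
Proof.
move=> homw; have homd := shomog_dd homw; rewrite coordXE; split=> //.
by apply: shomogB homw _; apply: shomog_mull (mpolyX_dhomog K i) _.
Qed.

End Transposition.

(** * Three variables *)

Notation x1 := 'X_i0.
Notation x2 := 'X_i1.
Notation x3 := 'X_i2.
Notation s12 := (tperm i0 i1).
Notation s23 := (tperm i1 i2).
Notation d12 := (dd i0 i1).
Notation d23 := (dd i1 i2).
Notation coord23 := (coordX i1 i2).

Lemma neq01 : i0 != i1. Proof. by []. Qed.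
Lemma neq12 : i1 != i2. Proof. by []. Qed.
Lemma neq02 : i0 != i2. Proof. by []. Qed.

Ltac perm3_eq :=
  apply/permP => -[[|[|[|//]]] ?]; rewrite ?permM; apply/val_inj; by rewrite !permE.

Lemma braid3 : (s23 * s12 * s23 = s12 * s23 * s12 :> 'S_3)%g.
Proof. perm3_eq. Qed.

Lemma tperm3 (x y : 'I_3) :
  [\/ tperm x y = 1%g, tperm x y = s12, tperm x y = s23 | tperm x y = (s12 * s23 * s12)%g].
Proof.
case: x => [[|[|[|//]]] ?]; case: y => [[|[|[|//]]] ?];
  by [apply: Or41; perm3_eq | apply: Or42; perm3_eq | apply: Or43; perm3_eq
     | apply: Or44; perm3_eq].
Qed.

Section ThreeVariables.
Variable K : idomainType.
Local Notation P := {mpoly K[3]}.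
Implicit Types (p q u v w f g r : P) (c : P * P).

Lemma s12X1 : msym s12 (x1 : P) = x2. Proof. by rewrite msymX1 tpermL. Qed.
Lemma s12X2 : msym s12 (x2 : P) = x1. Proof. by rewrite msymX1 tpermR. Qed.
Lemma s12X3 : msym s12 (x3 : P) = x3. Proof. by rewrite msymX1 tpermD. Qed.
Lemma s23X1 : msym s23 (x1 : P) = x1. Proof. by rewrite msymX1 tpermD. Qed.
Lemma s23X2 : msym s23 (x2 : P) = x3. Proof. by rewrite msymX1 tpermL. Qed.
Lemma s23X3 : msym s23 (x3 : P) = x2. Proof. by rewrite msymX1 tpermR. Qed.

Lemma symmetric3P p : p \is symmetric <-> msym s12 p = p /\ msym s23 p = p.
Proof.
split=> [/issymP symp | [sym12 sym23]]; first by rewrite !symp.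
have symt x y : msym (tperm x y) p = p.
  by case: (tperm3 x y) => ->; rewrite ?msym1m ?msymMm ?sym12 ?sym23 ?sym12.
apply/issymP => s; have [ts -> _] := prod_tpermP s.
elim: ts => [|[x y] ts IHts]; first by rewrite big_nil msym1m.
by rewrite big_cons msymMm symt.
Qed.

Lemma coord23X3 : coord23 (x3 : P) = (x2 + x3, -1).
Proof.
rewrite {1}(_ : x3 = x2 + x3 + -1 * x2); last by ring.
by rewrite coordX_unique ?neq12 // ?(msymN, msymD, msym1, s23X2, s23X3) // addrC.
Qed.

Lemma coord23X3sq : coord23 (x3 ^+ 2 : P) = (x2 ^+ 2 + x2 * x3 + x3 ^+ 2, - (x2 + x3)).
Proof.
rewrite {1}(_ : x3 ^+ 2 = x2 ^+ 2 + x2 * x3 + x3 ^+ 2 + - (x2 + x3) * x2); last by ring.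
rewrite coordX_unique ?neq12 //; rewrite ?expr2 ?(msymN, msymD, msymM, s23X2, s23X3); ring.
Qed.

(* Right multiplication by [r] on [R (x)_R12 R], in the coordinates [coord23];
   it uses [x2^2 = (x2 + x3) x2 - x2 x3] with [x2 + x3] and [x2 x3] in [R_12]. *)
Definition ract23 c r : P * P :=
  (c.1 * (coord23 r).1 - x2 * x3 * c.2 * (coord23 r).2,
   c.1 * (coord23 r).2 + c.2 * (coord23 r).1 + (x2 + x3) * c.2 * (coord23 r).2).

Lemma ract23_mulD a c c' r :
  ract23 ((a, a) * c + c') r = (a, a) * ract23 c r + ract23 c' r.
Proof. by rewrite /ract23 [RHS]surjective_pairing /=; congr pair; ring. Qed.

Lemma ract23_0 r : ract23 0 r = 0.
Proof. by rewrite /ract23 [RHS]surjective_pairing /=; congr pair; ring. Qed.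

Lemma coord23M w r : coord23 (w * r) = ract23 (coord23 w) r.
Proof.
have [syma symb] := coordX_sym neq12 w; have [syma' symb'] := coordX_sym neq12 r.
rewrite {1}(coordX_decomp i1 i2 w) {1}(coordX_decomp i1 i2 r) /ract23.
move: (coord23 w).1 (coord23 w).2 (coord23 r).1 (coord23 r).2 syma symb syma' symb'.
move=> a b a' b' syma symb syma' symb'.
have -> : (a + b * x2) * (a' + b' * x2) =
    a * a' - x2 * x3 * b * b' + (a * b' + b * a' + (x2 + x3) * b * b') * x2 :> P.
  by ring.
rewrite coordX_unique //.
  by rewrite msymB !msymM s23X2 s23X3 syma symb syma' symb'; ring.
by rewrite !msymD !msymM msymD s23X2 s23X3 syma symb syma' symb'; ring.
Qed.

End ThreeVariables.

(** * [R_21] over [R_3] *)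

HB.lock Definition form12 (K : idomainType) (A B C D : {mpoly K[3]})
    (c : {mpoly K[3]} * {mpoly K[3]}) : {mpoly K[3]} :=
  A * c.1 + B * d12 c.1 + C * c.2 + D * d12 c.2.

Section InvariantCoordinates.
Variable K : idomainType.
Local Notation P := {mpoly K[3]}.
Implicit Types (p q u v w f g : P) (c : P * P).

Lemma form12E A B C D c : form12 A B C D c = A * c.1 + B * d12 c.1 + C * c.2 + D * d12 c.2.
Proof. by rewrite form12.unlock. Qed.

Lemma form12_mulD A B C D f c c' : msym s12 f = f ->
  form12 A B C D ((f, f) * c + c') = f * form12 A B C D c + form12 A B C D c'.
Proof.
by move=> symf; rewrite !form12E /= !(dd_mulD neq01 _ _ symf); ring.
Qed.

Lemma form12_0 A B C D : form12 A B C D (0 : P * P) = 0.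
Proof. by rewrite form12E /= dd0 ?neq01 // !mulr0 !addr0. Qed.

Lemma form12_sum A B C D (l : seq (P * P)) (F : P -> P * P) c :
  (forall t, t \in l -> msym s12 t.1 = t.1) ->
  form12 A B C D (\sum_(t <- l) (t.1, t.1) * F t.2 + c) =
    \sum_(t <- l) t.1 * form12 A B C D (F t.2) + form12 A B C D c.
Proof.
elim: l => [_|t l IHl syml]; first by rewrite !big_nil !add0r.
rewrite !big_cons -addrA form12_mulD ?syml ?mem_head // IHl ?addrA // => t' lt'.
by rewrite syml // in_cons lt' orbT.
Qed.

Lemma form12_sym A B C D c :
  msym s12 A = A -> msym s12 C = C ->
  msym s12 B = B + (x1 - x2) * A -> msym s12 D = D + (x1 - x2) * C ->
  msym s12 (form12 A B C D c) = form12 A B C D c.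
Proof.
move=> symA symC symB symD; rewrite !form12E !msymD !msymM symA symB symC symD.
by rewrite !dd_sym ?neq01 // (msym_dd i0 i1 c.1) (msym_dd i0 i1 c.2); ring.
Qed.

(* The coordinates of [c] in [R_21 (x)_R3 R_21 (+) R_21{2}], where [c] stands for
   [c.1 (x) 1 + c.2 (x) x2] in [R (x)_R12 R]. *)
Definition ncoord0 : P * P -> P := form12 1 x2 x3 (x2 * (x1 + x3)).
Definition ncoord1 : P * P -> P := form12 0 (-1) 0 (- (x1 + x2 + x3)).
Definition ncoord2 : P * P -> P := form12 0 0 0 1.
Definition ncoordh : P * P -> P := form12 0 1 (-1) x1.

Lemma ncoord_sym12 c :
  [/\ msym s12 (ncoord0 c) = ncoord0 c, msym s12 (ncoord1 c) = ncoord1 c,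
      msym s12 (ncoord2 c) = ncoord2 c & msym s12 (ncoordh c) = ncoordh c].
Proof.
split; apply: form12_sym;
  rewrite ?(msymN, msymD, msymM, msym0, msym1, s12X1, s12X2, s12X3); ring.
Qed.

Lemma ncoord_recon c :
  c.1 = ncoord0 c + ncoord1 c * (x2 + x3) + ncoord2 c * (x2 ^+ 2 + x2 * x3 + x3 ^+ 2)
        + ncoordh c * x3 /\
  c.2 = - ncoord1 c - ncoord2 c * (x2 + x3) - ncoordh c.
Proof. by rewrite /ncoord0 /ncoord1 /ncoord2 /ncoordh !form12E; split; ring. Qed.

Section R21OverR3.
Variable g : P.
Hypothesis symg : msym s12 g = g.

Lemma d12_d23_sym23 : msym s23 (d12 (d23 g)) = d12 (d23 g).
Proof.
set q := d23 g.
have symq : msym s23 q = q := dd_sym neq12 g.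
have Ek : (x1 - x2) * d12 q = q - msym s12 q := ddP i0 i1 q.
have Ek' : (x1 - x3) * msym s23 (d12 q) = q - msym s23 (msym s12 q).
  by have := congr1 (msym s23) Ek; rewrite msymM !msymB symq s23X1 s23X2.
have Eq : (x2 - x3) * q = g - msym s23 g := ddP i1 i2 g.
have Ea : (x1 - x3) * msym s12 q = g - msym s12 (msym s23 g).
  by have := congr1 (msym s12) Eq; rewrite msymM !msymB s12X2 s12X3 symg.
have braid : msym s23 (msym s12 (msym s23 g)) = msym s12 (msym s23 g).
  by rewrite -!msymMm mulgA braid3 !msymMm symg.
have Eb : (x1 - x2) * msym s23 (msym s12 q) = msym s23 g - msym s12 (msym s23 g).
  by have := congr1 (msym s23) Ea; rewrite msymM !msymB s23X1 s23X3 braid.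
apply: (mulfI (@mpolyX_subr_neq0 _ K _ _ neq02)).
apply: (mulfI (@mpolyX_subr_neq0 _ K _ _ neq01)).
rewrite Ek' [RHS]mulrCA Ek !mulrBr Ea Eb.
move: (msym s12 (msym s23 g)) => G.
have -> : msym s23 g = g - (x2 - x3) * q by rewrite Eq opprB addrC subrK.
by ring.
Qed.

Lemma d12_pi23 : d12 (g - x2 * d23 g) = d23 g - x1 * d12 (d23 g).
Proof.
apply: (dd_unique neq01).
by rewrite msymB msymM symg s12X2 (msym_dd i0 i1 (d23 g)); ring.
Qed.

Lemma ncoordh_coord23 : ncoordh (coord23 g) = 0.
Proof. by rewrite /ncoordh form12E coordXE /= d12_pi23; ring. Qed.

Lemma ncoord1_coord23 : ncoord1 (coord23 g) = - d23 g - (x2 + x3) * d12 (d23 g).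
Proof. by rewrite /ncoord1 form12E coordXE /= d12_pi23; ring. Qed.

Lemma ncoord_decomp :
  g = ncoord0 (coord23 g) + ncoord1 (coord23 g) * x3 + ncoord2 (coord23 g) * x3 ^+ 2.
Proof.
have [rec1 rec2] := ncoord_recon (coord23 g).
rewrite {1}(coordX_decomp i1 i2 g) [in X in X + _]rec1 rec2 ncoordh_coord23; ring.
Qed.

Lemma ncoord_sym23 :
  [/\ msym s23 (ncoord0 (coord23 g)) = ncoord0 (coord23 g),
      msym s23 (ncoord1 (coord23 g)) = ncoord1 (coord23 g) &
      msym s23 (ncoord2 (coord23 g)) = ncoord2 (coord23 g)].
Proof.
have symk := d12_d23_sym23; have [sym1 sym2] := coordX_sym neq12 g.
have sym_n1 : msym s23 (ncoord1 (coord23 g)) = ncoord1 (coord23 g).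
  rewrite ncoord1_coord23 ?(msymN, msymB, msymD, msymM, s23X2, s23X3) symk.
  by rewrite (dd_sym neq12); ring.
split=> //; last by rewrite /ncoord2 form12E coordXE /= !mul0r !add0r mul1r.
have [rec1 _] := ncoord_recon (coord23 g).
have -> : ncoord0 (coord23 g) = (coord23 g).1 - ncoord1 (coord23 g) * (x2 + x3)
    - ncoord2 (coord23 g) * (x2 ^+ 2 + x2 * x3 + x3 ^+ 2).
  by rewrite [in X in X - _ - _]rec1 ncoordh_coord23; ring.
rewrite msymB msymB sym1 !msymM sym_n1 ?(msymD, msymM, s23X2, s23X3).
by rewrite /ncoord2 form12E coordXE /= !mul0r !add0r mul1r symk; ring.
Qed.

End R21OverR3.

Lemma ncoord_invariant h : msym s12 h = h ->
  [/\ ncoord0 (h * x3, - h) = 0, ncoord1 (h * x3, - h) = 0,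
      ncoord2 (h * x3, - h) = 0 & ncoordh (h * x3, - h) = h].
Proof.
move=> symh; have d1 : d12 (h * x3) = 0 by rewrite dd_eq0 // msymM symh s12X3.
have d2 : d12 (- h) = 0 by rewrite dd_eq0 // msymN symh.
by rewrite /ncoord0 /ncoord1 /ncoord2 /ncoordh !form12E /= d1 d2; split; ring.
Qed.

Lemma ncoord_shomog k c : shomog k 0 c.1 -> shomog k 1 c.2 ->
  [/\ shomog k 0 (ncoord0 c), shomog k 1 (ncoord1 c),
      shomog k 2 (ncoord2 c) & shomog k 1 (ncoordh c)].
Proof.
move=> hom1 hom2; have homd1 := shomog_dd neq01 hom1; have homd2 := shomog_dd neq01 hom2.
have hom_x1 := mpolyX_dhomog K i0; have hom_x2 := mpolyX_dhomog K i1.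
have hom_x3 := mpolyX_dhomog K i2.
have hom_1 : (1 : P) \is 0.-homog by apply: dhomog1.
have hom_N1 : (-1 : P) \is 0.-homog by rewrite rpredN; apply: dhomog1.
have hom_e1 : (- (x1 + x2 + x3) : P) \is 1.-homog by rewrite rpredN !rpredD.
have hom_e2 : (x2 * (x1 + x3) : P) \is 2.-homog by rewrite (dhomogM hom_x2) ?rpredD.
rewrite /ncoord0 /ncoord1 /ncoord2 /ncoordh !form12E.
split; repeat apply: shomogD; rewrite ?mul0r; try exact: shomog0;
  by apply: shomog_mull; eassumption.
Qed.

End InvariantCoordinates.

(** * The bimodules *)

Section Bimodules.
Variable R : realType.
Local Notation P := (P R).
Local Notation R111 := (@R111 R).
Local Notation R21 := (@R21 R).
Local Notation R12 := (@R12 R).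
Local Notation R3 := (@R3 R).
Implicit Types (p q r w a b h : P) (c : P * P) (x y : Mel R) (z : Nel R) (d : nat).

Lemma R21P p : reflect (msym s12 p = p) (R21 p).
Proof. exact: eqP. Qed.

Lemma R21_1 : R21 (1 : P).
Proof. by apply/R21P/msym1. Qed.

Lemma R21_0 : R21 (0 : P).
Proof. by apply/R21P/msym0. Qed.

Lemma R21_X3 : R21 (x3 : P).
Proof. by apply/R21P; rewrite s12X3. Qed.

Lemma R21D p q : R21 p -> R21 q -> R21 (p + q).
Proof. by move=> /R21P symp /R21P symq; apply/R21P; rewrite msymD symp symq. Qed.

Lemma R21M p q : R21 p -> R21 q -> R21 (p * q).
Proof. by move=> /R21P symp /R21P symq; apply/R21P; rewrite msymM symp symq. Qed.

Lemma R21_X3sq : R21 (x3 ^+ 2 : P).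
Proof. by rewrite expr2 R21M ?R21_X3. Qed.

Lemma R12_coord23 w : R12 (coord23 w).1 /\ R12 (coord23 w).2.
Proof. by have [sym1 sym2] := coordX_sym neq12 w; split; apply/eqP. Qed.

(* [Mcoord x = (u, v)] represents [u (x) 1 (x) 1 + v (x) x2 (x) 1]. *)
Definition Mcoord x : P * P := \sum_(t <- x) (t.1.1, t.1.1) * coord23 (t.1.2 * t.2).

Lemma Mcoord_balanced : balanced3 R12 R21 R111 R111 R21
  (fun a b e => (a, a) * coord23 (b * e)).
Proof.
split.
- by move=> a a' b d _ _ _ _; rewrite -mulrDl.
- by move=> a b b' d _ _ _ _; rewrite mulrDl coordXD ?neq12 // mulrDr.
- by move=> a b d d' _ _ _ _; rewrite mulrDr coordXD ?neq12 // mulrDr.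
- move=> k a b d _ _ _; split; first by rewrite scalerAl.
  by rewrite -scalerAl -scalerAr coordXZ ?neq12 // scalerAr.
- split=> [s a b d /eqP syms _ _ _ | s a b d _ _ _ _]; last by rewrite mulrA.
  by rewrite -[s * b * d]mulrA (coordX_mull neq12 _ syms) [RHS]mulrA.
Qed.

Lemma balanced3_term (V : lmodType R[i]) (beta : P -> P -> P -> V) a b (d : P) :
  balanced3 R12 R21 R111 R111 R21 beta -> R21 d ->
  beta a b d = beta (a * (coord23 (b * d)).1) 1 1 + beta (a * (coord23 (b * d)).2) x2 1.
Proof.
case=> _ addb _ _ [balR12 balR21] Rd.
have bal a' s b' : R12 s -> beta (a' * s) b' 1 = beta a' (s * b') 1.
  by move=> R12s; apply: balR12 R12s isT isT R21_1.
have [R12p R12q] := R12_coord23 (b * d).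
rewrite -[d in beta a b d]mulr1 -balR21 ?R21_1 //.
rewrite {1}(coordX_decomp i1 i2 (b * d)) addb ?R21_1 //.
by congr (_ + _); rewrite bal ?mulr1.
Qed.

Lemma balanced3_Mcoord (V : lmodType R[i]) (beta : P -> P -> P -> V) x :
  balanced3 R12 R21 R111 R111 R21 beta -> Mvalid x ->
  \sum_(t <- x) beta t.1.1 t.1.2 t.2 = beta (Mcoord x).1 1 1 + beta (Mcoord x).2 x2 1.
Proof.
move=> bal; have [adda _ _ _ _] := bal.
have addl a a' b : beta (a + a') b 1 = beta a b 1 + beta a' b 1.
  exact: adda a a' b 1 isT isT isT R21_1.
have beta0 b : beta 0 b 1 = 0 by apply: (addrI (beta 0 b 1)); rewrite -addl !addr0.
elim: x => [_|t x IHx validx]; first by rewrite /Mcoord !big_nil /= !beta0 addr0.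
have [_ _ Rt] := validx t (mem_head t x).
rewrite big_cons IHx => [|t' xt']; last by apply: validx; rewrite in_cons xt' orbT.
by rewrite (balanced3_term _ _ bal Rt) /Mcoord big_cons /= !addl addrACA.
Qed.

Lemma Meq_Mcoord x y : Meq x y -> Mcoord x = Mcoord y.
Proof. by move/(_ _ _ Mcoord_balanced). Qed.

Lemma Mcoord_Meq x y : Mvalid x -> Mvalid y -> Mcoord x = Mcoord y -> Meq x y.
Proof.
move=> validx validy eq_xy V beta bal.
by rewrite !(balanced3_Mcoord bal) // eq_xy.
Qed.

(* The natural map [N -> M]: [a (x) b] goes to [a (x) 1 (x) b], and [h] in [R_21{2}]
   to [h x3 (x) 1 (x) 1 - h (x) x2 (x) 1]. *)
Definition psi z : Mel R :=
  [seq (t.1, 1, t.2) | t <- z.1] ++ [:: (z.2 * x3, 1, 1); (- z.2, x2, 1)].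

Definition Ncoord z := Mcoord (psi z).

Lemma Mcoord_nil : Mcoord [::] = 0.
Proof. exact: big_nil. Qed.

Lemma Mcoord_cons t x : Mcoord (t :: x) = (t.1.1, t.1.1) * coord23 (t.1.2 * t.2) + Mcoord x.
Proof. exact: big_cons. Qed.

Lemma Mcoord_cat x y : Mcoord (x ++ y) = Mcoord x + Mcoord y.
Proof. exact: big_cat. Qed.

Lemma Mcoord_map (l : seq (P * P)) :
  Mcoord [seq (t.1, 1, t.2) | t <- l] = \sum_(t <- l) (t.1, t.1) * coord23 t.2.
Proof.
elim: l => [|t l IHl]; first by rewrite Mcoord_nil big_nil.
by rewrite /= Mcoord_cons IHl big_cons /= mul1r.
Qed.

Lemma Mcoord_shift h : Mcoord [:: (h * x3, 1, 1); (- h, x2, 1)] = (h * x3, - h).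
Proof.
rewrite !Mcoord_cons Mcoord_nil !mulr1 coordX1 ?coordX_X ?neq12 //=.
by rewrite [LHS]surjective_pairing /=; congr pair; ring.
Qed.

Lemma NcoordE z : Ncoord z = \sum_(t <- z.1) (t.1, t.1) * coord23 t.2 + (z.2 * x3, - z.2).
Proof. by rewrite /Ncoord /psi Mcoord_cat Mcoord_map Mcoord_shift. Qed.

Definition Nrep c : Nel R :=
  ([:: (ncoord0 c, 1); (ncoord1 c, x3); (ncoord2 c, x3 ^+ 2)], ncoordh c).

Lemma Ncoord_Nrep c : Ncoord (Nrep c) = c.
Proof.
rewrite NcoordE !big_cons big_nil /= coordX1 ?neq12 // coord23X3 coord23X3sq.
have [rec1 rec2] := ncoord_recon c.
rewrite [RHS]surjective_pairing [in RHS]rec1 [in RHS]rec2 [LHS]surjective_pairing /=.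
by move: (ncoord0 c) (ncoord1 c) (ncoord2 c) (ncoordh c) => n0 n1 n2 nh; congr pair; ring.
Qed.

Lemma R21_ncoord c :
  [/\ R21 (ncoord0 c), R21 (ncoord1 c), R21 (ncoord2 c) & R21 (ncoordh c)].
Proof. by have [? ? ? ?] := ncoord_sym12 c; split; apply/R21P. Qed.

Lemma Nvalid_Nrep c : Nvalid (Nrep c).
Proof.
have [R0 R1 R2 Rh] := R21_ncoord c; split; last exact: Rh.
move=> t; rewrite !inE => /or3P[]/eqP->.
- exact: (conj R0 R21_1).
- exact: (conj R1 R21_X3).
- exact: (conj R2 R21_X3sq).
Qed.

Lemma Mvalid_psi z : Nvalid z -> Mvalid (psi z).
Proof.
case=> validz _ t; rewrite mem_cat => /orP[/mapP[t' /validz[_ Rt'] ->] //|].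
by rewrite !inE => /orP[]/eqP-> /=; split; rewrite ?R21_1.
Qed.

Lemma form12_Ncoord A B C D z : Nvalid z ->
  form12 A B C D (Ncoord z) =
    \sum_(t <- z.1) t.1 * form12 A B C D (coord23 t.2) + form12 A B C D (z.2 * x3, - z.2).
Proof. by case=> validz _; rewrite NcoordE form12_sum // => t /validz[/R21P]. Qed.

Lemma ncoord_Ncoord z : Nvalid z ->
  [/\ ncoord0 (Ncoord z) = \sum_(t <- z.1) t.1 * ncoord0 (coord23 t.2),
      ncoord1 (Ncoord z) = \sum_(t <- z.1) t.1 * ncoord1 (coord23 t.2),
      ncoord2 (Ncoord z) = \sum_(t <- z.1) t.1 * ncoord2 (coord23 t.2) &
      ncoordh (Ncoord z) = z.2].
Proof.
move=> validz; have [validl /R21P symh] := validz.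
have [e0 e1 e2 eh] := ncoord_invariant symh.
have E0 : ncoord0 (Ncoord z) = \sum_(t <- z.1) t.1 * ncoord0 (coord23 t.2)
    + ncoord0 (z.2 * x3, - z.2) := form12_Ncoord _ _ _ _ validz.
have E1 : ncoord1 (Ncoord z) = \sum_(t <- z.1) t.1 * ncoord1 (coord23 t.2)
    + ncoord1 (z.2 * x3, - z.2) := form12_Ncoord _ _ _ _ validz.
have E2 : ncoord2 (Ncoord z) = \sum_(t <- z.1) t.1 * ncoord2 (coord23 t.2)
    + ncoord2 (z.2 * x3, - z.2) := form12_Ncoord _ _ _ _ validz.
have Eh : ncoordh (Ncoord z) = \sum_(t <- z.1) t.1 * ncoordh (coord23 t.2)
    + ncoordh (z.2 * x3, - z.2) := form12_Ncoord _ _ _ _ validz.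
split; [rewrite E0 e0 | rewrite E1 e1 | rewrite E2 e2 | rewrite Eh eh]; rewrite ?addr0 //.
rewrite big_seq big1 ?add0r // => t /validl[_ /R21P symt].
by rewrite ncoordh_coord23 ?mulr0.
Qed.

Lemma R3_ncoord g : R21 g ->
  [/\ R3 (ncoord0 (coord23 g)), R3 (ncoord1 (coord23 g)) & R3 (ncoord2 (coord23 g))].
Proof.
move=> /R21P symg; have [sym0 sym1 sym2 _] := ncoord_sym12 (coord23 g).
have [sym0' sym1' sym2'] := ncoord_sym23 symg.
by split; apply/symmetric3P.
Qed.

Lemma balanced2_term (V : lmodType R[i]) (gamma : P -> P -> V) a b :
  balanced2 R3 R21 R21 gamma -> R21 a -> R21 b ->
  gamma a b = gamma (a * ncoord0 (coord23 b)) 1 + gamma (a * ncoord1 (coord23 b)) x3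
              + gamma (a * ncoord2 (coord23 b)) (x3 ^+ 2).
Proof.
case=> _ addr _ _ balR3 Ra Rb; have [R0 R1 R2 _] := R21_ncoord (coord23 b).
have [S0 S1 S2] := R3_ncoord Rb.
have R1' := R21M R1 R21_X3; have R2' := R21M R2 R21_X3sq.
rewrite {1}(ncoord_decomp (elimT (R21P b) Rb)).
rewrite (addr _ _ _ Ra (R21D R0 R1') R2') (addr _ _ _ Ra R0 R1').
rewrite (balR3 _ _ _ S0 Ra R21_1) (balR3 _ _ _ S1 Ra R21_X3) (balR3 _ _ _ S2 Ra R21_X3sq).
by rewrite mulr1.
Qed.

Lemma R21_sum (I : eqType) (l : seq I) (F : I -> P) :
  (forall i, i \in l -> R21 (F i)) -> R21 (\sum_(i <- l) F i).
Proof.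
elim: l => [_|i l IHl RF]; first by rewrite big_nil R21_0.
rewrite big_cons R21D ?RF ?mem_head // IHl // => j lj.
by rewrite RF // in_cons lj orbT.
Qed.

Lemma R21_ncoord_sum (l : seq (P * P)) : valid2 R21 R21 l ->
  [/\ R21 (\sum_(t <- l) t.1 * ncoord0 (coord23 t.2)),
      R21 (\sum_(t <- l) t.1 * ncoord1 (coord23 t.2)) &
      R21 (\sum_(t <- l) t.1 * ncoord2 (coord23 t.2))].
Proof.
move=> validl; split; apply: R21_sum => t /validl[Rt _];
  case: (R21_ncoord (coord23 t.2)) => R0 R1 R2 _;
  [exact: R21M Rt R0 | exact: R21M Rt R1 | exact: R21M Rt R2].
Qed.

Lemma balanced2_Ncoord (V : lmodType R[i]) (gamma : P -> P -> V) z :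
  balanced2 R3 R21 R21 gamma -> Nvalid z ->
  \sum_(t <- z.1) gamma t.1 t.2 =
    gamma (ncoord0 (Ncoord z)) 1 + gamma (ncoord1 (Ncoord z)) x3
    + gamma (ncoord2 (Ncoord z)) (x3 ^+ 2).
Proof.
move=> bal validz; have [e0 e1 e2 _] := ncoord_Ncoord validz.
rewrite e0 e1 e2; have [adda _ _ _ _] := bal; case: validz => validl _.
have gamma0 b : R21 b -> gamma 0 b = 0.
  move=> Rb; apply: (addrI (gamma 0 b)).
  by rewrite -(adda _ _ _ R21_0 R21_0 Rb) !addr0.
elim: z.1 validl => [_|t l IHl validl].
  by rewrite !big_nil (gamma0 _ R21_1) (gamma0 _ R21_X3) (gamma0 _ R21_X3sq) !addr0.
have [Rt1 Rt2] := validl t (mem_head t l).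
have validl' : valid2 R21 R21 l by move=> t' lt'; apply: validl; rewrite in_cons lt' orbT.
have [S0 S1 S2] := R21_ncoord_sum validl'; have [R0 R1 R2 _] := R21_ncoord (coord23 t.2).
rewrite !big_cons IHl // (balanced2_term bal Rt1 Rt2).
rewrite (adda _ _ _ (R21M Rt1 R0) S0 R21_1) (adda _ _ _ (R21M Rt1 R1) S1 R21_X3).
rewrite (adda _ _ _ (R21M Rt1 R2) S2 R21_X3sq).
by rewrite addrACA (addrACA (gamma _ 1)).
Qed.

Lemma Ncoord_balanced : balanced2 R3 R21 R21 (fun a b => (a, a) * coord23 b).
Proof.
split.
- by move=> a a' b _ _ _; rewrite -mulrDl.
- by move=> a b b' _ _ _; rewrite coordXD ?neq12 // mulrDr.
- by move=> k a b _ _; rewrite scalerAl.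
- by move=> k a b _ _; rewrite coordXZ ?neq12 // scalerAr.
- move=> s a b /symmetric3P[_ syms] _ _.
  by rewrite (coordX_mull neq12 _ syms) [RHS]mulrA.
Qed.

Lemma Neq_Ncoord z z' : Neq z z' -> Ncoord z = Ncoord z'.
Proof. by case=> eq1 eq2; rewrite !NcoordE (eq1 _ _ Ncoord_balanced) eq2. Qed.

Lemma Ncoord_Neq z z' : Nvalid z -> Nvalid z' -> Ncoord z = Ncoord z' -> Neq z z'.
Proof.
move=> validz validz' eqN; split.
  by move=> V gamma bal; rewrite !(balanced2_Ncoord bal) // eqN.
have [_ _ _ <-] := ncoord_Ncoord validz; have [_ _ _ <-] := ncoord_Ncoord validz'.
by rewrite eqN.
Qed.

Definition phi x : Nel R := Nrep (Mcoord x).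

Lemma Mcoord_scale k x : Mcoord (Mscale k x) = k *: Mcoord x.
Proof.
elim: x => [|t x IHx]; first by rewrite Mcoord_nil scaler0.
by rewrite /= !Mcoord_cons IHx scalerDr scalerAl.
Qed.

Lemma Mcoord_lact r x : Mcoord (Mlact r x) = (r, r) * Mcoord x.
Proof.
elim: x => [|t x IHx]; first by rewrite Mcoord_nil mulr0.
by rewrite /= !Mcoord_cons IHx mulrDr mulrA.
Qed.

Lemma Mcoord_ract r x : Mcoord (Mract x r) = ract23 (Mcoord x) r.
Proof.
elim: x => [|t x IHx]; first by rewrite Mcoord_nil ract23_0.
by rewrite /= !Mcoord_cons IHx ract23_mulD mulrA coord23M.
Qed.

Lemma Ncoord_add z z' : Ncoord (Nadd z z') = Ncoord z + Ncoord z'.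
Proof.
rewrite !NcoordE big_cat addrACA; apply: congr1.
by rewrite [RHS]surjective_pairing /=; congr pair; ring.
Qed.

Lemma Ncoord_scale k z : Ncoord (Nscale k z) = k *: Ncoord z.
Proof.
rewrite !NcoordE big_map scalerDr scaler_sumr.
rewrite (eq_bigr (fun t => k *: ((t.1, t.1) * coord23 t.2))) => [|t _]; last first.
  by rewrite /= scalerAl.
apply: congr1; rewrite [RHS]surjective_pairing /=.
by rewrite scalerAl scalerN.
Qed.

Lemma Ncoord_lact r z : Ncoord (Nlact r z) = (r, r) * Ncoord z.
Proof.
rewrite !NcoordE big_map mulrDr mulr_sumr.
rewrite (eq_bigr (fun t => (r, r) * ((t.1, t.1) * coord23 t.2))) => [|t _]; last first.
  by rewrite /= mulrA.
apply: congr1; rewrite [RHS]surjective_pairing /=.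
by rewrite mulrA mulrN.
Qed.

Lemma Ncoord_ract r z : Ncoord (Nract z r) = ract23 (Ncoord z) r.
Proof.
rewrite /Ncoord /psi !Mcoord_cat !Mcoord_shift.
have -> : [seq (t.1, 1, t.2) | t <- (Nract z r).1] = Mract [seq (t.1, 1, t.2) | t <- z.1] r.
  by rewrite /=; elim: z.1 => //= t l ->.
rewrite Mcoord_ract -[X in ract23 (X + _)]mul1r ract23_mulD mul1r; apply: congr1.
rewrite /ract23 [RHS]surjective_pairing /= [in LHS](coordX_decomp i1 i2 r).
by congr pair; ring.
Qed.

Lemma Nvalid_add z z' : Nvalid z -> Nvalid z' -> Nvalid (Nadd z z').
Proof.
case=> validz Rz [validz' Rz']; rewrite /Nadd; split=> /= [t|]; last exact: R21D Rz Rz'.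
by rewrite mem_cat => /orP[/validz|/validz'].
Qed.

Lemma Nvalid_scale k z : Nvalid z -> Nvalid (Nscale k z).
Proof.
have R21Z p : R21 p -> R21 (k *: p) by move=> Rp; apply/R21P; rewrite msymZ (eqP Rp).
case=> validz Rz; rewrite /Nscale; split=> /= [t|]; last exact: R21Z _ Rz.
by move=> /mapP[t' /validz[Rt1 Rt2] ->] /=; split; [apply: R21Z _ Rt1 | apply: Rt2].
Qed.

Lemma Nvalid_lact r z : R21 r -> Nvalid z -> Nvalid (Nlact r z).
Proof.
move=> Rr [validz Rz]; rewrite /Nlact; split=> /= [t|]; last exact: R21M Rr Rz.
by move=> /mapP[t' /validz[Rt1 Rt2] ->] /=; split; [apply: R21M Rr Rt1 | apply: Rt2].
Qed.

Lemma Nvalid_ract r z : R21 r -> Nvalid z -> Nvalid (Nract z r).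
Proof.
move=> Rr [validz Rz]; rewrite /Nract; split=> /= [t|]; last exact: R21M Rz Rr.
by move=> /mapP[t' /validz[Rt1 Rt2] ->] /=; split; [apply: Rt1 | apply: R21M Rt2 Rr].
Qed.

Lemma Nvalid_phi x : Nvalid (phi x).
Proof. exact: Nvalid_Nrep. Qed.

Lemma Ncoord_phi x : Ncoord (phi x) = Mcoord x.
Proof. exact: Ncoord_Nrep. Qed.

Lemma Neq_phi x z : Nvalid z -> Mcoord x = Ncoord z -> Neq (phi x) z.
Proof. by move=> validz eqxz; apply: Ncoord_Neq (Nvalid_phi x) validz _; rewrite Ncoord_phi. Qed.

(* The element of [M] with coordinates [c] is homogeneous of degree [d], for
   [deg x_m = 2]. *)
Definition coord_homog (d : nat) c :=
  (odd d -> c = 0) /\ shomog d./2 0 c.1 /\ shomog d./2 1 c.2.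

Lemma coord_homog0 d : coord_homog d 0.
Proof. by split=> //; split; apply: shomog0. Qed.

Lemma coord_homogD d c c' : coord_homog d c -> coord_homog d c' -> coord_homog d (c + c').
Proof.
case=> c0 [hom1 hom2] [c0' [hom1' hom2']]; split=> [odd_d|]; first by rewrite c0 // c0' // addr0.
by split; [apply: shomogD hom1 hom1' | apply: shomogD hom2 hom2'].
Qed.

Lemma coord_homog_term d (t : P * P * P) :
  (exists d1 d2 d3, d = (d1 + d2 + d3)%N /\
    [/\ homdeg 0 d1 t.1.1, homdeg 0 d2 t.1.2 & homdeg 0 d3 t.2]) ->
  coord_homog d ((t.1.1, t.1.1) * coord23 (t.1.2 * t.2)).
Proof.
case=> d1 [d2 [d3 [-> []]]].
case=> [-> _ _|[e1 [-> hom1]]]; first by rewrite mul0r; apply: coord_homog0.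
case=> [-> _|[e2 [-> hom2]]]; first by rewrite mul0r coordX0 ?mulr0 //; apply: coord_homog0.
case=> [->|[e3 [-> hom3]]]; first by rewrite mulr0 coordX0 ?mulr0 //; apply: coord_homog0.
have -> : (2 * e1 + 0 + (2 * e2 + 0) + (2 * e3 + 0) = (e2 + e3 + e1).*2)%N by lia.
rewrite /coord_homog odd_double doubleK; split=> //.
have [homp homq] := shomog_coordX neq12 (dhomog_shomog (dhomogM hom2 hom3)).
by split=> /=; apply: shomog_mulr hom1 _.
Qed.

Lemma Mcoord_homog d y : Mhomrep d y -> coord_homog d (Mcoord y).
Proof.
elim: y => [_|t y IHy homy]; first by rewrite Mcoord_nil; apply: coord_homog0.
rewrite Mcoord_cons; apply: coord_homogD; first by apply/coord_homog_term/homy/mem_head.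
by apply: IHy => t' yt'; apply: homy; rewrite in_cons yt' orbT.
Qed.

(* Terms with a zero first factor must be dropped from a homogeneous
   representative: [0 (x) x3^2], say, has no degree below 4. *)
Definition Ndrop0 z : Nel R := ([seq t <- z.1 | t.1 != 0], z.2).

Definition Mdrop0 x : Mel R := [seq t <- x | t.1.1 != 0].

Lemma Ncoord_drop0 z : Ncoord (Ndrop0 z) = Ncoord z.
Proof.
rewrite !NcoordE big_filter big_rmcond // => t.
by rewrite negbK => /eqP ->; apply: mul0r.
Qed.

Lemma Mcoord_drop0 x : Mcoord (Mdrop0 x) = Mcoord x.
Proof.
rewrite /Mcoord big_filter big_rmcond // => t.
by rewrite negbK => /eqP ->; apply: mul0r.
Qed.

Lemma Nvalid_drop0 z : Nvalid z -> Nvalid (Ndrop0 z).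
Proof. by case=> validz Rz; split=> // t; rewrite mem_filter => /andP[_ /validz]. Qed.

Lemma Mvalid_drop0 x : Mvalid x -> Mvalid (Mdrop0 x).
Proof. by move=> validx t; rewrite mem_filter => /andP[_ /validx]. Qed.

Lemma homdeg_X3pow N k p : shomog N k p -> p != 0 ->
  exists d1 d2, N.*2 = (d1 + d2)%N /\ homdeg 0 d1 p /\ homdeg 0 d2 (x3 ^+ k : P).
Proof.
case=> p0 homp nz_p; have le_kN : (k <= N)%N.
  by rewrite leqNgt; apply: contra nz_p => /p0 ->.
exists (2 * (N - k))%N, (2 * k)%N; split; first by lia.
split; right; [exists (N - k)%N | exists k]; rewrite addn0 //.
by split=> //; rewrite -[k in k.-homog]mul1n dhomogMn // mpolyX_dhomog.
Qed.

Lemma Nhomrep_Nrep d c : coord_homog d c -> Nhomrep d (Ndrop0 (Nrep c)).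
Proof.
case: (boolP (odd d)) => [odd_d [/(_ odd_d) -> _]|even_d [_ [hom1 hom2]]].
  rewrite /Ndrop0; split=> [t|/=]; last by left; apply: form12_0.
  rewrite mem_filter /= !inE => /andP[nz_t /or3P[]/eqP def_t];
    by rewrite def_t /ncoord0 /ncoord1 /ncoord2 /= form12_0 eqxx in nz_t.
have defd : d = (d./2).*2 by rewrite -{1}(odd_double_half d) (negbTE even_d).
have [h0 h1 h2 hh] := ncoord_shomog hom1 hom2.
rewrite /Ndrop0; split=> [t|/=].
  rewrite mem_filter /= !inE => /andP[nz_t /or3P[]/eqP def_t];
    rewrite def_t /= in nz_t *; rewrite defd.
  - by have := homdeg_X3pow h0 nz_t; rewrite expr0.
  - by have := homdeg_X3pow h1 nz_t; rewrite expr1.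
  - exact: homdeg_X3pow h2 nz_t.
have [->|nz_h] := eqVneq (ncoordh c) 0; first by left.
case: hh => h0' homh; have le1 : (1 <= d./2)%N.
  by rewrite leqNgt; apply: contra nz_h => /h0' ->.
by right; exists (d./2 - 1)%N; split=> //; lia.
Qed.

Lemma Mhomrep_psi d z : Nhomrep d z -> Mhomrep d (Mdrop0 (psi z)).
Proof.
have hom1 : homdeg 0 0 (1 : P) by right; exists 0%N; split=> //; apply: dhomog1.
case=> homz homh t; rewrite mem_filter => /andP[nz_t].
rewrite mem_cat => /orP[/mapP[t' /homz[d1 [d2 [-> [hom1' hom2']]]] ->]|].
  by exists d1, 0%N, d2; rewrite addn0.
rewrite !inE => /orP[]/eqP def_t; rewrite def_t /= in nz_t *.
  case: homh => [h0|[e [-> homh]]]; first by rewrite h0 mul0r eqxx in nz_t.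
  exists (2 * e.+1)%N, 0%N, 0%N; split; first by lia.
  split=> //; right; exists e.+1; split; first by lia.
  by rewrite -[e.+1]addn1; apply: dhomogM homh (mpolyX_dhomog _ i2).
case: homh => [h0|[e [-> homh]]]; first by rewrite h0 oppr0 eqxx in nz_t.
exists (2 * e)%N, 2%N, 0%N; split; first by lia.
split=> //; right; [exists e | exists 1%N]; rewrite addn0; split=> //.
  by rewrite -scaleN1r dhomogZ.
exact: mpolyX_dhomog.
Qed.

Lemma phi_graded d x : Mvalid x -> (Mhom d x <-> Nhom d (phi x)).
Proof.
move=> validx; split=> [[y [validy eqxy homy]]|[z [validz eqxz homz]]].
  exists (Ndrop0 (phi y)); split; first exact/Nvalid_drop0/Nvalid_phi.
    apply: Neq_phi; first exact/Nvalid_drop0/Nvalid_phi.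
    by rewrite Ncoord_drop0 Ncoord_phi (Meq_Mcoord eqxy).
  exact/Nhomrep_Nrep/Mcoord_homog.
exists (Mdrop0 (psi z)); split; first exact/Mvalid_drop0/Mvalid_psi.
  apply: Mcoord_Meq validx (Mvalid_drop0 (Mvalid_psi validz)) _.
  by rewrite Mcoord_drop0 -/(Ncoord z) -(Neq_Ncoord eqxz) Ncoord_phi.
exact: Mhomrep_psi.
Qed.

End Bimodules.

Theorem lemma3p4 (R : realType) :
  exists phi : Mel R -> Nel R, graded_bimod_iso_MN phi.
Proof.
exists (@phi R).
split; first by move=> x _; apply: Nvalid_phi.
split; first by move=> x y _ _ /Meq_Mcoord eq_xy; rewrite /phi eq_xy; split=> // V beta.
split.
  move=> x y _ _; apply: Neq_phi; first exact: Nvalid_add (Nvalid_phi x) (Nvalid_phi y).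
  by rewrite Mcoord_cat Ncoord_add !Ncoord_phi.
split.
  move=> k x _; apply: Neq_phi; first exact: Nvalid_scale (Nvalid_phi x).
  by rewrite Mcoord_scale Ncoord_scale Ncoord_phi.
split.
  move=> r x Rr _; apply: Neq_phi; first exact: Nvalid_lact Rr (Nvalid_phi x).
  by rewrite Mcoord_lact Ncoord_lact Ncoord_phi.
split.
  move=> r x Rr _; apply: Neq_phi; first exact: Nvalid_ract Rr (Nvalid_phi x).
  by rewrite Mcoord_ract Ncoord_ract Ncoord_phi.
split; first by move=> x y validx validy /Neq_Ncoord; rewrite !Ncoord_phi; apply: Mcoord_Meq.
split; first by move=> z validz; exists (psi z); split; [apply: Mvalid_psi | apply: Neq_phi].
by move=> d x validx; apply: phi_graded.
Qed.
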